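(* For integers $i,j\geq 0$ and $t\geq 1$ let $h_{i,j}(t)$ be the number of proper hyperbinary expansions $(\varepsilon_{\nu-1},\ldots,\varepsilon_0)$ of $t-1$ such that $|\{0\leq \ell<\nu:\varepsilon_\ell=2\}|=i$ and $|\{0\leq \ell<\nu:\varepsilon_\ell=0\}|=j$. Then for all $k\in\mathbb{Z}$ and $t\ge1$, \[ \varphi(k,t)=\sum_{\substack{i,j\geq 0\\i-j=k}}2^{-(i+j)}h_{i,j}(t). \]
   Context: A hyperbinary expansion of a nonnegative integer $n$ is a sequence $(\varepsilon_{\nu-1},\ldots,\varepsilon_0)\in \{0,1,2\}^{\nu}$ ($\nu\ge0$) with $\sum_{0\leq i<\nu}\varepsilon_i2^i=n$; it is proper if either $\nu=0$, or $\nu>0$ and $\varepsilon_{\nu-1}\neq 0$. Define numbers $\varphi(k,t)$ for $k\in\mathbb{Z}$ and integers $t\ge1$ by $\varphi(0,1)=1$, $\varphi(k,1)=0$ for $k\neq0$, and for $t\ge1$: $\varphi(k,2t)=\varphi(k,t)$, $\varphi(k,2t+1)=\frac12\varphi(k-1,t)+\frac12\varphi(k+1,t+1)$. *)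

From mathcomp Require Import all_boot all_order all_algebra.
Set Implicit Arguments. Unset Strict Implicit. Unset Printing Implicit Defensive.
Import Order.TTheory GRing.Theory Num.Theory.
Local Open Scope ring_scope.

Fixpoint phi_fuel (fuel : nat) (k : int) (t : nat) : rat :=
  match fuel with
  | 0%N => 0
  | fuel'.+1 =>
    if (t <= 1)%N then (if k == 0 then 1 else 0)
    else if ~~ odd t then phi_fuel fuel' k t./2
    else (1/2) * phi_fuel fuel' (k - 1) t./2 + (1/2) * phi_fuel fuel' (k + 1) t./2.+1
  end.

Definition phi (k : int) (t : nat) : rat := phi_fuel t k t.

(* A hyperbinary expansion (eps_{nu-1},...,eps_0) is represented by the list
   [:: eps_0; eps_1; ...; eps_{nu-1}] (least significant digit first). *)
Definition hb_value (s : seq nat) : nat := \sum_(l < size s) nth 0%N s l * 2 ^ l.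

Definition is_hyperbinary (n : nat) (s : seq nat) : bool :=
  all (fun e => e <= 2)%N s && (hb_value s == n).

Definition is_proper (s : seq nat) : bool :=
  (size s == 0)%N || (last 0%N s != 0%N).

Fixpoint digit_seqs (nu : nat) : seq (seq nat) :=
  match nu with
  | 0%N => [:: [::]]
  | nu'.+1 => [seq e :: s | e <- iota 0 3, s <- digit_seqs nu']
  end.

(* Every proper hyperbinary expansion of t-1 has length nu <= t (since
   2^(nu-1) <= value), so enumerating lengths 0..t is exhaustive. *)
Definition h (i j t : nat) : nat :=
  \sum_(nu < t.+1)
    count (fun s => [&& is_hyperbinary t.-1 s, is_proper s,
                       count_mem 2%N s == i & count_mem 0%N s == j])
          (digit_seqs nu).

From mathcomp Require Import all_boot all_order all_algebra zify.
Import Order.TTheory GRing.Theory Num.Theory.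
Local Open Scope ring_scope.

(* Let W(n, k) be the sum of 2^-(#2 + #0) over the proper hyperbinary
   expansions of n with #2 - #0 = k.  Splitting off the least significant
   digit, which is forced to be 1 when n is odd and is 0 or 2 when n > 0 is
   even, gives W(2m+1, k) = W(m, k) and
   W(2m+2, k) = W(m+1, k+1)/2 + W(m, k-1)/2, with W(0, k) = [k = 0]: this is
   the recursion of phi(k, n+1).  Grouping the expansions counted by
   W(t-1, k) according to their numbers (i, j) of 2s and 0s gives the sum of
   the statement. *)

Lemma digit_seqsS nu :
  digit_seqs nu.+1 = [seq 0%N :: s | s <- digit_seqs nu]
                  ++ [seq 1%N :: s | s <- digit_seqs nu]
                  ++ [seq 2%N :: s | s <- digit_seqs nu].
Proof. by rewrite /= cats0. Qed.

Lemma size_digit_seqs {nu s} : s \in digit_seqs nu -> size s = nu.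
Proof.
elim: nu s => [|nu IH] s; first by rewrite inE => /eqP ->.
by rewrite digit_seqsS !mem_cat => /or3P[] /mapP[r /IH r_nu ->] /=; rewrite r_nu.
Qed.

Lemma hb_value_cons e r : hb_value (e :: r) = (e + (hb_value r).*2)%N.
Proof.
rewrite /hb_value big_ord_recl /= muln1 -mul2n big_distrr; congr (_ + _)%N.
by apply: eq_bigr => i _; rewrite expnS mulnCA.
Qed.

Lemma hb_value_gt0 s : s != [::] -> is_proper s -> (0 < hb_value s)%N.
Proof.
elim: s => [//|e [|a r] IH] _; rewrite /is_proper /= hb_value_cons.
  by rewrite /hb_value big_ord0 addn0 lt0n.
by move=> last_a; have := IH isT; rewrite /is_proper /= => /(_ last_a); lia.
Qed.

Lemma is_hyperbinary_cons n e r :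
  is_hyperbinary n (e :: r) =
  [&& e <= 2, all (fun e => e <= 2) r & n == e + (hb_value r).*2]%N.
Proof. by rewrite /is_hyperbinary /= hb_value_cons andbA eq_sym. Qed.

Lemma is_proper_cons e r :
  (0 < hb_value (e :: r))%N -> is_proper (e :: r) = is_proper r.
Proof. by case: r => [|a r] //; rewrite hb_value_cons /hb_value big_ord0 addn0 lt0n. Qed.

Definition excess (s : seq nat) : int := (count_mem 2%N s)%:Z - (count_mem 0%N s)%:Z.

Definition weight (s : seq nat) : rat := 2 ^- (count_mem 2%N s + count_mem 0%N s).

Definition contrib (n : nat) (k : int) (s : seq nat) : rat :=
  if [&& is_hyperbinary n s, is_proper s & excess s == k] then weight s else 0.

Lemma excess_cons e r : (e <= 2)%N -> excess (e :: r) = excess r + (e%:Z - 1).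
Proof. by rewrite /excess; case: e => [|[|[|]]] //= _; lia. Qed.

Lemma weight_cons e r : (e <= 2)%N ->
  weight (e :: r) = (if e == 1%N then 1 else 2^-1) * weight r.
Proof.
rewrite /weight; case: e => [|[|[|]]] //= _; rewrite ?mul1r //.
  by rewrite addnS exprS invfM.
by rewrite addSn exprS invfM.
Qed.

Lemma contrib_cons_digit e m k r : (e <= 2)%N -> (0 < e + m.*2)%N ->
  contrib (e + m.*2) k (e :: r) =
  (if e == 1%N then 1 else 2^-1) * contrib m (k - (e%:Z - 1)) r.
Proof.
move=> e_le2; rewrite /contrib is_hyperbinary_cons /is_hyperbinary e_le2.
rewrite eqn_add2l (inj_eq double_inj) [hb_value r == m]eq_sym.
have [-> n_gt0|_ _] := eqVneq m (hb_value r); last first.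
  by rewrite !andbF mulr0.
rewrite is_proper_cons ?hb_value_cons // excess_cons // weight_cons //.
have -> : (excess r + (e%:Z - 1) == k) = (excess r == k - (e%:Z - 1)).
  by apply/eqP/eqP; lia.
by rewrite !andbT; case: ifP; rewrite ?mulr0.
Qed.

Lemma contrib_cons_odd n e k r : odd (n + e) -> contrib n k (e :: r) = 0.
Proof.
rewrite /contrib is_hyperbinary_cons.
have [->|_] := eqVneq n (e + (hb_value r).*2); last by rewrite !andbF.
by rewrite addnAC addnn -doubleD odd_double.
Qed.

Lemma contrib_zero k s : s != [::] -> contrib 0 k s = 0.
Proof.
move=> s_nonempty; rewrite /contrib /is_hyperbinary.
have [s_prop|] := boolP (is_proper s); last by rewrite !andbF.
by rewrite eqn0Ngt hb_value_gt0 // andbF.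
Qed.

Definition wsum_len (nu n : nat) (k : int) : rat :=
  \sum_(s <- digit_seqs nu) contrib n k s.

Lemma wsum_len0 n k : wsum_len 0 n k = ((n == 0%N) && (k == 0))%:R.
Proof.
rewrite /wsum_len big_seq1 /contrib /is_hyperbinary /excess /weight /hb_value.
rewrite big_ord0 expr0 invr1 /= subrr [0 == k]eq_sym.
by rewrite [(0 == n)%N]eq_sym; case: (_ && _).
Qed.

Lemma wsum_lenS nu n k : wsum_len nu.+1 n k =
  \sum_(r <- digit_seqs nu) contrib n k (0%N :: r)
  + \sum_(r <- digit_seqs nu) contrib n k (1%N :: r)
  + \sum_(r <- digit_seqs nu) contrib n k (2%N :: r).
Proof. by rewrite /wsum_len digit_seqsS !big_cat /= !big_map addrA. Qed.

Lemma wsum_lenS_zero nu k : wsum_len nu.+1 0 k = 0.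
Proof. by rewrite wsum_lenS !big1 ?addr0 // => r _; rewrite contrib_zero. Qed.

Lemma wsum_lenS_odd nu m k : wsum_len nu.+1 m.*2.+1 k = wsum_len nu m k.
Proof.
rewrite wsum_lenS [\sum_(r <- _) contrib _ _ (0%N :: r)]big1 => [|r _]; last first.
  by rewrite contrib_cons_odd // addn0 /= odd_double.
rewrite [\sum_(r <- _) contrib _ _ (2%N :: r)]big1 => [|r _]; last first.
  by rewrite contrib_cons_odd // addn2 /= odd_double.
rewrite add0r addr0; apply: eq_bigr => r _.
by rewrite -add1n contrib_cons_digit // mul1r subrr subr0.
Qed.

Lemma wsum_lenS_even nu m k : wsum_len nu.+1 m.+1.*2 k =
  2^-1 * wsum_len nu m.+1 (k + 1) + 2^-1 * wsum_len nu m (k - 1).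
Proof.
rewrite wsum_lenS [\sum_(r <- _) contrib _ _ (1%N :: r)]big1 => [|r _]; last first.
  by rewrite contrib_cons_odd // addn1 /= odd_double.
rewrite addr0 /wsum_len !big_distrr; congr (_ + _); apply: eq_bigr => r _.
  by rewrite -[m.+1.*2]add0n contrib_cons_digit // opprB subr0 addrC.
by rewrite doubleS -addn2 addnC contrib_cons_digit.
Qed.

Definition wsum (L n : nat) (k : int) : rat := \sum_(nu < L) wsum_len nu n k.

Lemma wsum_zero L k : wsum L.+1 0 k = (k == 0)%:R.
Proof.
by rewrite /wsum big_ord_recl wsum_len0 big1 ?addr0 // => nu _; rewrite wsum_lenS_zero.
Qed.

Lemma wsum_odd L m k : wsum L.+1 m.*2.+1 k = wsum L m k.
Proof.
by rewrite /wsum big_ord_recl wsum_len0 add0r; apply: eq_bigr => nu _; rewrite wsum_lenS_odd.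
Qed.

Lemma wsum_even L m k : wsum L.+1 m.+1.*2 k =
  2^-1 * wsum L m.+1 (k + 1) + 2^-1 * wsum L m (k - 1).
Proof.
rewrite /wsum big_ord_recl wsum_len0 doubleS add0r !big_distrr -big_split /=.
by apply: eq_bigr => nu _; rewrite wsum_lenS_even.
Qed.

Lemma phi_fuel_even fuel k u : (0 < u)%N -> phi_fuel fuel.+1 k u.*2 = phi_fuel fuel k u.
Proof. by case: u => [|u] //= _; rewrite doubleK odd_double. Qed.

Lemma phi_fuel_odd fuel k u : (0 < u)%N -> phi_fuel fuel.+1 k u.*2.+1 =
  2^-1 * phi_fuel fuel (k - 1) u + 2^-1 * phi_fuel fuel (k + 1) u.+1.
Proof. by case: u => [|u] //= _; rewrite uphalf_double odd_double !div1r. Qed.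

Lemma phi_fuel_wsum fuel k t L : (0 < t <= fuel)%N -> (t <= L)%N ->
  phi_fuel fuel k t = wsum L t.-1 k.
Proof.
elim: fuel k t L => [|fuel IH] k t L t_bounds t_le_L; first lia.
case: L t_le_L => [|L] t_le_L; first lia.
have [u [def_t|def_t]] : exists u, t = u.*2 \/ t = u.*2.+1.
  exists t./2; have [t_odd|t_even] := boolP (odd t); [right|left];
    by rewrite -{1}(odd_double_half t) ?t_odd ?(negbTE t_even).
- case: u def_t => [|u] -> in t_bounds t_le_L *; first lia.
  by rewrite phi_fuel_even // doubleS wsum_odd (IH _ u.+1 L) //; lia.
- case: u def_t => [|u] -> in t_bounds t_le_L *.
    by rewrite /= wsum_zero; case: (k == 0).
  rewrite phi_fuel_odd // wsum_even (IH _ u.+1 L) ?(IH _ u.+2 L) //=; try lia.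
  by rewrite addrC.
Qed.

Lemma sum_ord_delta {R : nmodType} (F : nat -> R) (N a : nat) : (a < N)%N ->
  \sum_(i < N) (if a == i then F i else 0) = F a.
Proof.
by move=> a_lt_N; rewrite -big_mkcond (big_pred1 (Ordinal a_lt_N)).
Qed.

Lemma natr_count (R : pzSemiRingType) (T : Type) (a : pred T) (s : seq T) :
  (count a s)%:R = \sum_(x <- s) (a x)%:R :> R.
Proof. by rewrite -sum1_count natr_sum big_mkcond; apply: eq_bigr => x _; case: (a x). Qed.

Lemma contrib_split N n k s :
  (count_mem 2%N s < N)%N -> (count_mem 0%N s < N)%N ->
  contrib n k s =
  \sum_(i < N) \sum_(j < N | i%:Z - j%:Z == k) 2 ^- (i + j)%N *
    ([&& is_hyperbinary n s, is_proper s,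
         count_mem 2%N s == i & count_mem 0%N s == j] : nat)%:R.
Proof.
move=> c2_lt c0_lt.
rewrite (eq_bigr (fun i : 'I_N => if count_mem 2%N s == i then contrib n k s else 0))
  ?(sum_ord_delta (fun=> contrib n k s)) // => i _.
rewrite big_mkcond (eq_bigr (fun j : 'I_N => if count_mem 0%N s == j then
  (if count_mem 2%N s == i then contrib n k s else 0) else 0))
  ?(sum_ord_delta (fun=> if count_mem 2%N s == i then contrib n k s else 0)) // => j _.
have [<-|_] := eqVneq (count_mem 0%N s) j; last by rewrite !andbF mulr0 if_same.
have [<-|_] := eqVneq (count_mem 2%N s) i; last by rewrite !andbF mulr0 if_same.
rewrite /contrib /excess /weight !andbT.
by case: (_ == k); case: is_hyperbinary; case: is_proper; rewrite ?mulr1 ?mulr0.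
Qed.

Lemma wsum_split N L n k : (L <= N)%N ->
  wsum L n k =
  \sum_(i < N) \sum_(j < N | i%:Z - j%:Z == k) 2 ^- (i + j)%N *
    (\sum_(nu < L) count (fun s => [&& is_hyperbinary n s, is_proper s,
         count_mem 2%N s == i & count_mem 0%N s == j]) (digit_seqs nu))%:R.
Proof.
move=> L_le_N; rewrite /wsum /wsum_len.
under eq_bigr => nu _.
  rewrite big_seq; under eq_bigr => s s_nu.
    have count_lt a : (count a s < N)%N.
      by rewrite (leq_ltn_trans (count_size a s)) // (size_digit_seqs s_nu)
        (leq_trans (ltn_ord nu)).
    rewrite (contrib_split N) ?count_lt //; over.
  rewrite -big_seq exchange_big /=.
  under eq_bigr => i _ do rewrite exchange_big /=.
  over.
rewrite exchange_big /=; apply: eq_bigr => i _.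
rewrite exchange_big /=; apply: eq_bigr => j _.
rewrite natr_sum big_distrr; apply: eq_bigr => nu _.
by rewrite natr_count big_distrr.
Qed.

Theorem proposition3p3 (k : int) (t N : nat) :
  (1 <= t)%N -> (t < N)%N ->
  phi k t =
    \sum_(i < N) \sum_(j < N | (i%:Z - j%:Z == k))
      ((2 ^- (i + j)%N) * (h i j t)%:R : rat).
Proof.
move=> t_gt0 t_lt_N.
rewrite /phi (@phi_fuel_wsum t k t t.+1) ?t_gt0 ?leqnn //.
by rewrite (@wsum_split N t.+1).
Qed.
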